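(* Work in the max-plus semifield $(\mathbb{R}\cup\{-\infty\},\oplus=\max,\otimes=+,\mathbb{0}=-\infty,\mathbb{1}=0)$. Let $m\geq1$, let $p_{1j},p_{2j}\in\mathbb{R}$, $w_{j}>0$, $d_{j}>0$, $h_{j}\in\mathbb{R}$ for $j=1,\ldots,m$, and let $f_{1}\leq g_{1}$, $f_{2}\leq g_{2}$, $a\leq b$ be reals. Consider the problem of minimizing over $(x_{1},x_{2})^{T}\in\mathbb{R}^{2}$ $$\max_{1\leq j\leq m}\big(w_{j}(|x_{1}-p_{1j}|+|x_{2}-p_{2j}|)+h_{j}\big)$$ subject to $|x_{1}-p_{1j}|+|x_{2}-p_{2j}|\leq d_{j}$ ($j=1,\ldots,m$), $f_{1}-x_{2}\leq x_{1}\leq g_{1}-x_{2}$, $f_{2}+x_{1}\leq x_{2}\leq g_{2}+x_{1}$, and $a\leq x_{1}\leq b$. In max-plus notation, let $\bm{o}_{j}=(o_{1j},o_{2j})^{T}$ with $o_{1j}=p_{1j}p_{2j}$, $o_{2j}=p_{1j}^{-1}p_{2j}$; let $\bm{f}=(f_{1},f_{2})^{T}$, $\bm{g}=(g_{1},g_{2})^{T}$, $$\bm{B}=\begin{pmatrix}\mathbb{0}&a^{2}\\ b^{-2}&\mathbb{0}\end{pmatrix},\qquad \bm{B}^{\ast}=\begin{pmatrix}\mathbb{1}&a^{2}\\ b^{-2}&\mathbb{1}\end{pmatrix};$$ $$\bm{s}=\bigoplus_{1\leq j\leq m}d_{j}^{-1}\bm{o}_{j}\oplus\bm{f},\qquad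 \bm{t}^{-}=\bigoplus_{1\leq j\leq m}d_{j}^{-1}\bm{o}_{j}^{-}\oplus\bm{g}^{-}.$$ Suppose $\bm{t}^{-}\bm{B}^{\ast}\bm{s}\leq\mathbb{1}$. Then the minimum value of the problem is $$\theta=\bigoplus_{1\leq j,l\leq m}\left(h_{j}^{\frac{w_{l}}{w_{j}+w_{l}}}h_{l}^{\frac{w_{j}}{w_{j}+w_{l}}}(\bm{o}_{j}^{-}\bm{B}^{\ast}\bm{o}_{l})^{\frac{w_{j}w_{l}}{w_{j}+w_{l}}}\oplus h_{j}(\bm{o}_{j}^{-}\bm{B}^{\ast}\bm{s})^{w_{j}}\oplus h_{l}(\bm{t}^{-}\bm{B}^{\ast}\bm{o}_{l})^{w_{l}}\right),$$ and, with $$\bm{q}=\bigoplus_{1\leq j\leq m}\theta^{-1/w_{j}}h_{j}^{1/w_{j}}\bm{o}_{j},\qquad \bm{r}^{-}=\bigoplus_{1\leq j\leq m}\theta^{-1/w_{j}}h_{j}^{1/w_{j}}\bm{o}_{j}^{-},$$ all solution vectors $\bm{x}=(x_{1},x_{2})^{T}$ have entries $x_{1}=y_{1}^{1/2}y_{2}^{-1/2}$, $x_{2}=y_{1}^{1/2}y_{2}^{1/2}$, where $\bm{y}=(y_{1},y_{2})^{T}=\bm{B}^{\ast}\bm{u}$ and the parameter vector $\bm{u}$ satisfies $\bm{q}\oplus\bm{s}\leq\bm{u}\leq((\bm{r}^{-}\oplus\bm{t}^{-})\bm{B}^{\ast})^{-}$.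
   Context: In the max-plus semifield, the product $xy$ means $x+y$, $x^{-1}=-x$, the power $x^{p}$ means $px$ for real $p$, and the order is the usual order of reals. Matrix and vector operations use $\max$ in place of addition and $+$ in place of multiplication; inequalities between vectors are componentwise. For a column vector $\bm{x}=(x_{i})$ with real entries, $\bm{x}^{-}$ is the row vector $(-x_{i})$ (and for a row vector, the column vector of negated entries). $\mathbb{0}=-\infty$ and $\mathbb{1}=0$. *)

(* Max-plus objects are written out in ordinary arithmetic:
   max-plus "x (+) y" = Num.max x y, "x (x) y" = x + y, x^p = p * x, x^-1 = -x. *)
From HB Require Import structures.
From mathcomp Require Import all_boot all_order all_algebra.
From mathcomp Require Import reals.
Set Implicit Arguments. Unset Strict Implicit. Unset Printing Implicit Defensive.
Import Order.TTheory GRing.Theory Num.Theory.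
Local Open Scope ring_scope.

Section MaxPlus.
Variable R : realType.

(* maximum of a finite nonempty family (for n = 0 it is an irrelevant 0);
   the first value is used as the neutral element, which is harmless since
   max is idempotent *)
Definition bmax (n : nat) (F : 'I_n -> R) : R :=
  \big[Num.max/head 0 (map F (enum 'I_n))]_(j < n) F j.

Definition vec2 (x1 x2 : R) : 'I_2 -> R :=
  fun i => if val i == 0%N then x1 else x2.

Definition vmax (x y : 'I_2 -> R) : 'I_2 -> R := fun i => Num.max (x i) (y i).

Definition vconj (x : 'I_2 -> R) : 'I_2 -> R := fun i => - x i.

Definition mxv (A : 'I_2 -> 'I_2 -> R) (x : 'I_2 -> R) : 'I_2 -> R :=
  fun i => bmax (fun k => A i k + x k).

Definition dotmp (r x : 'I_2 -> R) : R := bmax (fun k => r k + x k).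

Definition vxm (r : 'I_2 -> R) (A : 'I_2 -> 'I_2 -> R) : 'I_2 -> R :=
  fun k => bmax (fun i => r i + A i k).

Definition Bstar (a b : R) : 'I_2 -> 'I_2 -> R :=
  fun i k => if val i == val k then 0
             else if val i == 0%N then 2 * a else - (2 * b).

Definition ovec (m : nat) (p1 p2 : 'I_m -> R) (j : 'I_m) : 'I_2 -> R :=
  vec2 (p1 j + p2 j) (p2 j - p1 j).

Definition objective (m : nat) (p1 p2 w h : 'I_m -> R) (x1 x2 : R) : R :=
  bmax (fun j => w j * (`|x1 - p1 j| + `|x2 - p2 j|) + h j).

Definition feasible (m : nat) (p1 p2 d : 'I_m -> R) (f1 f2 g1 g2 a b : R)
    (x1 x2 : R) : Prop :=
  (forall j, `|x1 - p1 j| + `|x2 - p2 j| <= d j) /\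
  f1 - x2 <= x1 /\ x1 <= g1 - x2 /\
  f2 + x1 <= x2 /\ x2 <= g2 + x1 /\
  a <= x1 /\ x1 <= b.

Definition svec (m : nat) (p1 p2 d : 'I_m -> R) (f1 f2 : R) : 'I_2 -> R :=
  vmax (fun i => bmax (fun j => - d j + ovec p1 p2 j i)) (vec2 f1 f2).

Definition tmvec (m : nat) (p1 p2 d : 'I_m -> R) (g1 g2 : R) : 'I_2 -> R :=
  vmax (fun i => bmax (fun j => - d j + vconj (ovec p1 p2 j) i))
       (vconj (vec2 g1 g2)).

Definition theta (m : nat) (p1 p2 w d h : 'I_m -> R) (f1 f2 g1 g2 a b : R) : R :=
  let B := Bstar a b in
  let o := ovec p1 p2 in
  let s := svec p1 p2 d f1 f2 in
  let tm := tmvec p1 p2 d g1 g2 in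
  bmax (fun j => bmax (fun l =>
    Num.max
      (w l / (w j + w l) * h j + w j / (w j + w l) * h l
         + (w j * w l) / (w j + w l) * dotmp (vconj (o j)) (mxv B (o l)))
      (Num.max (h j + w j * dotmp (vconj (o j)) (mxv B s))
               (h l + w l * dotmp tm (mxv B (o l)))))).

Definition qvec (m : nat) (p1 p2 w h : 'I_m -> R) (th : R) : 'I_2 -> R :=
  fun i => bmax (fun j => - (th / w j) + h j / w j + ovec p1 p2 j i).

Definition rmvec (m : nat) (p1 p2 w h : 'I_m -> R) (th : R) : 'I_2 -> R :=
  fun i => bmax (fun j => - (th / w j) + h j / w j + vconj (ovec p1 p2 j) i).

End MaxPlus.

From HB Require Import structures.
From mathcomp Require Import all_boot all_order all_algebra.
From mathcomp Require Import reals.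
From mathcomp Require Import ring lra.
Import Order.TTheory GRing.Theory Num.Theory.
Local Open Scope ring_scope.
Set Implicit Arguments. Unset Strict Implicit.

(* Put y1 = x1 + x2 and y2 = x2 - x1, i.e. y = (x1 x2, x1^-1 x2) in max-plus
   notation.  This rotation turns rectilinear distances into Chebyshev ones,
   |x1 - p1j| + |x2 - p2j| = max_i |y_i - o_ij|, so a point is feasible with
   objective at most v iff  q(v) (+) s <= y <= (r^-(v) (+) t^-)^-  and
   B* y <= y, where q(v), r^-(v) are q, r^- with theta replaced by v and the
   last condition encodes a <= x1 <= b.  Since B* is a Kleene star, with unit
   diagonal and B* B* = B*, the vectors satisfying such two-sided bounds are
   exactly the B* u with u between the lower bound and the conjugate of
   (r^-(v) (+) t^-) B*, and they exist iff
   (r^-(v) (+) t^-) B* (q(v) (+) s) <= 1.  Expanded term by term, using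
   t^- B* s <= 1 for the constant term, this condition is exactly theta <= v;
   so theta is the optimal value and the solutions are the case v = theta. *)

Section MaxPlusVectors.
Variable R : realType.
Implicit Types (c t : R) (x y u l r : 'I_2 -> R) (A S : 'I_2 -> 'I_2 -> R).

Lemma le_bmax n (F : 'I_n -> R) j : F j <= bmax F.
Proof. exact: le_bigmax. Qed.

Lemma bmax_leP n (F : 'I_n -> R) c :
  (0 < n)%N -> bmax F <= c <-> forall j, F j <= c.
Proof.
case: n F => // n F _; rewrite /bmax enum_ordSl /=.
split=> [/bigmax_leP[_ le_c] j | le_c]; first exact: le_c.
by apply: bigmax_le.
Qed.

Lemma bmax_attained n (F : 'I_n -> R) : (0 < n)%N -> exists j, bmax F = F j.
Proof.
case: n F => // n F _; exists [arg max_(j > ord0) F j]%O.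
case: arg_maxP => // j _ Fj_max; apply: le_anti; rewrite le_bmax andbT.
by apply/bmax_leP => // i; apply: Fj_max.
Qed.

Lemma le_max_bmax n (F : 'I_n -> R) t j : F j <= Num.max (bmax F) t.
Proof. by rewrite le_max le_bmax. Qed.

Lemma max_bmax_attained n (F : 'I_n -> R) t : (0 < n)%N ->
  (exists j, Num.max (bmax F) t = F j) \/ Num.max (bmax F) t = t.
Proof.
move=> n_gt0; have [j Fj] := bmax_attained F n_gt0.
by rewrite /Num.max; case: ifP => _; [right | left; exists j].
Qed.

Lemma ord2_ind (P : 'I_2 -> Prop) : P ord0 -> P ord_max -> forall i, P i.
Proof.
move=> P0 P1 [[|[|//]] i_lt2].
- by rewrite (_ : Ordinal _ = ord0) //; apply: val_inj.
- by rewrite (_ : Ordinal _ = ord_max) //; apply: val_inj.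
Qed.

Lemma mxv_leP A x i c : mxv A x i <= c <-> forall k, A i k + x k <= c.
Proof. exact: bmax_leP. Qed.

Lemma dotmp_mxv_leP r A x c :
  dotmp r (mxv A x) <= c <-> forall i k, r i + (A i k + x k) <= c.
Proof.
have rowP i : r i + mxv A x i <= c <-> forall k, r i + (A i k + x k) <= c.
  rewrite addrC -lerBrDr mxv_leP.
  by split=> le_c k; have := le_c k; rewrite lerBrDl addrC.
by rewrite /dotmp bmax_leP //; split=> le_c i; apply/rowP.
Qed.

Lemma le_vconj_vxmP r A u k :
  u k <= vconj (vxm r A) k <-> forall i, r i + A i k + u k <= 0.
Proof.
rewrite /vconj /vxm lerNr bmax_leP //.
by split=> le_u i; have := le_u i; lra.
Qed.

Definition subeigen_between S l r y : Prop :=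
  [/\ forall i, l i <= y i, forall i, r i + y i <= 0
    & forall i k, S i k + y k <= y i].

Section KleeneStar.
Variable S : 'I_2 -> 'I_2 -> R.
Hypotheses (S_diag : forall i, S i i = 0)
           (S_trans : forall i j k, S i j + S j k <= S i k).

Lemma le_mxv_star x i : x i <= mxv S x i.
Proof. by have := le_bmax (fun k => S i k + x k) i; rewrite S_diag add0r. Qed.

Lemma subeigen_mxv_star u i k : S i k + mxv S u k <= mxv S u i.
Proof.
rewrite addrC -lerBrDr; apply/mxv_leP => j; rewrite lerBrDr.
have := le_bmax (fun j => S i j + u j) j; have := S_trans i k j; rewrite /mxv.
lra.
Qed.

Lemma mxv_star_subeigen y :
  (forall i k, S i k + y k <= y i) -> forall i, mxv S y i = y i.
Proof.
by move=> sub_y i; apply: le_anti; rewrite le_mxv_star andbT; apply/mxv_leP.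
Qed.

Variables l r : 'I_2 -> R.

Lemma subeigen_betweenP y :
  subeigen_between S l r y <->
  exists u, [/\ forall i, l i <= u i, forall i, u i <= vconj (vxm r S) i
              & forall i, y i = mxv S u i].
Proof.
split=> [[l_le r_le sub_y] | [u [l_le le_r yE]]].
- exists y; split=> // [k | i]; last by rewrite mxv_star_subeigen.
  by apply/le_vconj_vxmP => i; have := r_le i; have := sub_y i k; lra.
- split=> [i | i | i k]; rewrite !yE; last exact: subeigen_mxv_star.
  + exact: le_trans (l_le i) (le_mxv_star u i).
  + rewrite addrC -lerBrDr sub0r; apply/mxv_leP => k.
    by have /le_vconj_vxmP/(_ i) := le_r k; lra.
Qed.

Lemma subeigen_between_exists :
  (exists y, subeigen_between S l r y) <-> dotmp r (mxv S l) <= 0.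
Proof.
split=> [[y [l_le r_le sub_y]] | le0].
- apply/dotmp_mxv_leP => i k.
  by have := l_le k; have := r_le i; have := sub_y i k; lra.
- exists (mxv S l); apply/subeigen_betweenP; exists l; split=> // k.
  by apply/le_vconj_vxmP => i; move/dotmp_mxv_leP: le0 => /(_ i k); lra.
Qed.

End KleeneStar.
End MaxPlusVectors.

Section Bstar.
Variables (R : realType) (a b : R).

Lemma Bstar_diag i : Bstar a b i i = 0.
Proof. by rewrite /Bstar eqxx. Qed.

Lemma Bstar_trans :
  a <= b -> forall i j k, Bstar a b i j + Bstar a b j k <= Bstar a b i k.
Proof. by move=> le_ab; do 3!apply: ord2_ind; rewrite /Bstar /=; lra. Qed.

Lemma Bstar_subeigenP (y : 'I_2 -> R) :
  (forall i k, Bstar a b i k + y k <= y i) <->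
  2 * a + y ord_max <= y ord0 /\ y ord0 <= y ord_max + 2 * b.
Proof.
split=> [sub_y | [? ?]]; last by do 2!apply: ord2_ind; rewrite /Bstar /=; lra.
by move: (sub_y ord0 ord_max) (sub_y ord_max ord0); rewrite /Bstar /=; lra.
Qed.

End Bstar.

Section RealFacts.
Variable R : realType.

Lemma l1_le_rotate (x1 x2 p1 p2 e : R) :
  `|x1 - p1| + `|x2 - p2| <= e <->
  `|(x1 + x2) - (p1 + p2)| <= e /\ `|(x2 - x1) - (p2 - p1)| <= e.
Proof.
rewrite !ler_norml.
have [s1|s1] := lerP 0 (x1 - p1); have [s2|s2] := lerP 0 (x2 - p2);
  rewrite ?(ger0_norm s1) ?(ltr0_norm s1) ?(ger0_norm s2) ?(ltr0_norm s2);
  split=> [? | [/andP[? ?] /andP[? ?]]]; try lra;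
  by split; apply/andP; split; lra.
Qed.

Lemma affine_le_slackP (w h c v : R) :
  0 < w -> h + w * c <= v <-> c <= v / w - h / w.
Proof. by move=> w_gt0; rewrite -mulrBl ler_pdivlMr //; lra. Qed.

Lemma pair_le_slackP (wj wl hj hl c v : R) : 0 < wj -> 0 < wl ->
  wl / (wj + wl) * hj + wj / (wj + wl) * hl + wj * wl / (wj + wl) * c <= v <->
  c <= (v / wj - hj / wj) + (v / wl - hl / wl).
Proof.
move=> wj_gt0 wl_gt0.
have k_gt0 : 0 < wj * wl / (wj + wl) by rewrite divr_gt0 ?mulr_gt0 //; lra.
rewrite -(ler_pM2l k_gt0 c).
have -> : wj * wl / (wj + wl) * ((v / wj - hj / wj) + (v / wl - hl / wl))
          = v - wl / (wj + wl) * hj - wj / (wj + wl) * hl.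
  by field; rewrite ?gt_eqF //; lra.
lra.
Qed.

End RealFacts.

Section LocationProblem.
Variables (R : realType) (m : nat) (p1 p2 w d h : 'I_m -> R)
          (f1 f2 g1 g2 a b : R).
Hypotheses (m_gt0 : (0 < m)%N) (w_gt0 : forall j, 0 < w j) (le_ab : a <= b).

Local Notation B := (Bstar a b).
Local Notation o := (ovec p1 p2).
Local Notation s := (svec p1 p2 d f1 f2).
Local Notation tm := (tmvec p1 p2 d g1 g2).
Local Notation lower v := (vmax (qvec p1 p2 w h v) s).
Local Notation upper v := (vmax (rmvec p1 p2 w h v) tm).
Local Notation slack v j := (v / w j - h j / w j).
Local Notation feasible := (feasible p1 p2 d f1 f2 g1 g2 a b).
Local Notation objective := (objective p1 p2 w h).

Lemma lower_upper_boundP v (y : 'I_2 -> R) i :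
  lower v i <= y i /\ upper v i + y i <= 0 <->
  [/\ forall j, `|y i - o j i| <= d j, forall j, `|y i - o j i| <= slack v j,
      vec2 f1 f2 i <= y i & y i <= vec2 g1 g2 i].
Proof.
have bmaxP := bmax_leP _ _ m_gt0.
rewrite /vmax /svec /tmvec /qvec /rmvec /vconj -lerBrDr sub0r !ge_max lerN2.
split=> [[/and3P[/bmaxP q_le /bmaxP s_le ->] /and3P[/bmaxP le_r /bmaxP le_t ->]]
        | [le_d le_slack -> ->]].
- split=> // j; rewrite ler_norml; apply/andP.
  + by move: (s_le j) (le_t j) => ? ?; split; lra.
  + by move: (q_le j) (le_r j) => ? ?; split; lra.
- rewrite !andbT; split; apply/andP; split; apply/bmaxP => j.
  all: move: (le_slack j) (le_d j); rewrite !ler_norml.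
  all: by move=> /andP[? ?] /andP[? ?]; lra.
Qed.

Lemma objective_leP v x1 x2 :
  objective x1 x2 <= v <->
  forall j, `|x1 - p1 j| + `|x2 - p2 j| <= slack v j.
Proof.
rewrite /objective (bmax_leP _ _ m_gt0).
split=> le_v j; last by rewrite addrC affine_le_slackP.
by rewrite -(affine_le_slackP _ _ _ (w_gt0 j)) addrC.
Qed.

Lemma feasible_subeigenP v x1 x2 (y : 'I_2 -> R) :
  y ord0 = x1 + x2 -> y ord_max = x2 - x1 ->
  feasible x1 x2 /\ objective x1 x2 <= v <->
  subeigen_between B (lower v) (upper v) y.
Proof.
move=> y0E y1E.
have distP j (e : R) : `|x1 - p1 j| + `|x2 - p2 j| <= e <->
                       forall i, `|y i - o j i| <= e.
  rewrite l1_le_rotate; split=> [[? ?] | le_e].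
    by apply: ord2_ind; rewrite /= ?y0E ?y1E.
  by move: (le_e ord0) (le_e ord_max); rewrite /= y0E y1E.
rewrite /subeigen_between objective_leP.
split=> [[[le_d [? [? [? [? [? ?]]]]]] le_v] | [l_le u_le /Bstar_subeigenP]].
- have bounds i : lower v i <= y i /\ upper v i + y i <= 0.
    apply/lower_upper_boundP; split=> [j | j | |].
    + exact: proj1 (distP j _) (le_d j) i.
    + exact: proj1 (distP j _) (le_v j) i.
    + by move: i; apply: ord2_ind; rewrite /vec2 /= ?y0E ?y1E; lra.
    + by move: i; apply: ord2_ind; rewrite /vec2 /= ?y0E ?y1E; lra.
  split=> [i | i |]; [by case: (bounds i) | by case: (bounds i) |].
  by apply/Bstar_subeigenP; rewrite y0E y1E; lra.
- have bounds i := proj1 (lower_upper_boundP v y i) (conj (l_le i) (u_le i)).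
  have [le_d0 le_v0 f_le0 le_g0] := bounds ord0.
  have [le_d1 le_v1 f_le1 le_g1] := bounds ord_max.
  move: f_le0 le_g0 f_le1 le_g1; rewrite /vec2 /= y0E y1E => ? ? ? ? [? ?].
  split; first (do !split; try lra).
  + by move=> j; apply/distP; apply: ord2_ind; [apply: le_d0 | apply: le_d1].
  + by move=> j; apply/distP; apply: ord2_ind; [apply: le_v0 | apply: le_v1].
Qed.

Lemma upper_ge v i :
  (forall j, - (v / w j) + h j / w j - o j i <= upper v i) /\ tm i <= upper v i.
Proof. by split=> [j|]; [apply: le_max_bmax | rewrite le_max lexx orbT]. Qed.

Lemma lower_ge v k :
  (forall l, - (v / w l) + h l / w l + o l k <= lower v k) /\ s k <= lower v k.
Proof. by split=> [l|]; [apply: le_max_bmax | rewrite le_max lexx orbT]. Qed.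

Lemma upper_attained v i :
  (exists j, upper v i = - (v / w j) + h j / w j - o j i) \/ upper v i = tm i.
Proof. exact: max_bmax_attained. Qed.

Lemma lower_attained v k :
  (exists l, lower v k = - (v / w l) + h l / w l + o l k) \/ lower v k = s k.
Proof. exact: max_bmax_attained. Qed.

Let B_diag := @Bstar_diag R a b.
Let B_trans := Bstar_trans le_ab.

Lemma feasible_obj_leP v x1 x2 :
  feasible x1 x2 /\ objective x1 x2 <= v <->
  exists u : 'I_2 -> R,
    (forall i, lower v i <= u i) /\
    (forall i, u i <= vconj (vxm (upper v) B) i) /\
    x1 = mxv B u ord0 / 2 - mxv B u ord_max / 2 /\
    x2 = mxv B u ord0 / 2 + mxv B u ord_max / 2.
Proof.
split=> [opt | [u [l_le [le_r [x1E x2E]]]]].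
- have /(subeigen_betweenP B_diag B_trans) [u [l_le le_r yE]] :
    subeigen_between B (lower v) (upper v) (vec2 (x1 + x2) (x2 - x1)).
    exact/(@feasible_subeigenP v x1 x2 (vec2 _ _) erefl erefl).
  by exists u; do !split=> //; rewrite -!yE /vec2 /=; lra.
- rewrite (@feasible_subeigenP v x1 x2 (mxv B u)); try lra.
  by apply/(subeigen_betweenP B_diag B_trans); exists u.
Qed.

Hypothesis ts_le0 : dotmp tm (mxv B s) <= 0.
Local Notation th := (theta p1 p2 w d h f1 f2 g1 g2 a b).

Lemma theta_leP v :
  th <= v <->
  forall j l, [/\ dotmp (vconj (o j)) (mxv B (o l)) <= slack v j + slack v l,
                  dotmp (vconj (o j)) (mxv B s) <= slack v j
                & dotmp tm (mxv B (o l)) <= slack v l].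
Proof.
have bmaxP := bmax_leP _ _ m_gt0.
rewrite /theta bmaxP; split=> le_v j.
- move=> l; move/bmaxP/(_ l): (le_v j); rewrite !ge_max => /and3P[T1 T2 T3].
  split; first exact/(pair_le_slackP _ _ _ _ (w_gt0 j) (w_gt0 l)).
  + exact/(affine_le_slackP _ _ _ (w_gt0 j)).
  + exact/(affine_le_slackP _ _ _ (w_gt0 l)).
- apply/bmaxP => l; have [T1 T2 T3] := le_v j l; rewrite !ge_max; apply/and3P.
  split; first exact/(pair_le_slackP _ _ _ _ (w_gt0 j) (w_gt0 l)).
  + exact/(affine_le_slackP _ _ _ (w_gt0 j)).
  + exact/(affine_le_slackP _ _ _ (w_gt0 l)).
Qed.

Lemma upper_lower_le0P v : dotmp (upper v) (mxv B (lower v)) <= 0 <-> th <= v.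
Proof.
rewrite theta_leP dotmp_mxv_leP; split=> [le0 j l | le_v i k].
- split; apply/dotmp_mxv_leP => i k; rewrite /vconj;
    have [/(_ j) up_j up_t] := upper_ge v i;
    have [/(_ l) low_l low_s] := lower_ge v k;
    by move: (le0 i k); lra.
- case: (upper_attained v i) => [[j ->] | ->];
    case: (lower_attained v k) => [[l ->] | ->].
  + by have [/dotmp_mxv_leP/(_ i k) + _ _] := le_v j l; rewrite /vconj; lra.
  + by have [_ /dotmp_mxv_leP/(_ i k) + _] := le_v j j; rewrite /vconj; lra.
  + by have [_ _ /dotmp_mxv_leP/(_ i k)] := le_v l l; lra.
  + exact: proj1 (dotmp_mxv_leP _ _ _ _) ts_le0 i k.
Qed.

Lemma optimal_value_leP v :
  (exists x1 x2, feasible x1 x2 /\ objective x1 x2 <= v) <-> th <= v.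
Proof.
rewrite -upper_lower_le0P -(subeigen_between_exists B_diag B_trans).
split=> [[x1 [x2 opt]] | [y sub_y]].
- exists (vec2 (x1 + x2) (x2 - x1)).
  exact/(@feasible_subeigenP v x1 x2 (vec2 _ _) erefl erefl).
- exists ((y ord0 - y ord_max) / 2), ((y ord0 + y ord_max) / 2).
  by rewrite (feasible_subeigenP v (y := y)) //; lra.
Qed.

End LocationProblem.

Unset Implicit Arguments. Set Strict Implicit.

Theorem theorem4 (R : realType) (m : nat) (p1 p2 w d h : 'I_m -> R)
    (f1 f2 g1 g2 a b : R) :
  (0 < m)%N ->
  (forall j, 0 < w j) -> (forall j, 0 < d j) ->
  f1 <= g1 -> f2 <= g2 -> a <= b ->
  let B := Bstar a b in
  let s := svec p1 p2 d f1 f2 in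
  let tm := tmvec p1 p2 d g1 g2 in
  dotmp tm (mxv B s) <= 0 ->
  let th := theta p1 p2 w d h f1 f2 g1 g2 a b in
  let q := qvec p1 p2 w h th in
  let rm := rmvec p1 p2 w h th in
  (* th is the minimum value of the problem *)
  ((exists x1 x2, feasible p1 p2 d f1 f2 g1 g2 a b x1 x2 /\
                  objective p1 p2 w h x1 x2 = th) /\
   (forall x1 x2, feasible p1 p2 d f1 f2 g1 g2 a b x1 x2 ->
                  th <= objective p1 p2 w h x1 x2)) /\
  (* the solutions are exactly the vectors x obtained from y = Bstar u
     with q (+) s <= u <= ((r^- (+) t^-) Bstar)^- *)
  (forall x1 x2,
     (feasible p1 p2 d f1 f2 g1 g2 a b x1 x2 /\
      objective p1 p2 w h x1 x2 = th) <->
     exists u : 'I_2 -> R,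
       (forall i, vmax q s i <= u i) /\
       (forall i, u i <= vconj (vxm (vmax rm tm) B) i) /\
       x1 = (mxv B u) ord0 / 2 - (mxv B u) ord_max / 2 /\
       x2 = (mxv B u) ord0 / 2 + (mxv B u) ord_max / 2).
Proof.
move=> m_gt0 w_gt0 _ _ _ le_ab B s tm ts_le0 th q rm.
have optP := optimal_value_leP h m_gt0 w_gt0 le_ab ts_le0.
have th_le x1 x2 : feasible p1 p2 d f1 f2 g1 g2 a b x1 x2 ->
                   th <= objective p1 p2 w h x1 x2.
  by move=> feas; apply/optP; exists x1, x2.
have optE x1 x2 :
    feasible p1 p2 d f1 f2 g1 g2 a b x1 x2 /\ objective p1 p2 w h x1 x2 = th <->
    feasible p1 p2 d f1 f2 g1 g2 a b x1 x2 /\ objective p1 p2 w h x1 x2 <= th.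
  split=> [[feas ->] | [feas le_th]] //; split=> //.
  by apply: le_anti; rewrite le_th th_le.
split; first split=> //.
- have [x1 [x2 opt]] := proj2 (optP th) (lexx th).
  by exists x1, x2; apply/optE.
- by move=> x1 x2; rewrite optE; apply: feasible_obj_leP.
Qed.
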